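(* Let $\Phi\subset\mathrm{PGL}(n,\mathbb{R})$ be a one-parameter subgroup and let $U\subset\mathbb{RP}^{n-1}$ be a non-empty open set such that the orbit under $\Phi$ of each point of $U$ is a proper subset of a projective line. Then $\Phi$ is a linear flow.
   Context: A linear flow is an injective homomorphism $\Phi:\mathbb{R}\to\mathrm{PGL}(n,\mathbb{R})$ such that the orbit of every point of $\mathbb{RP}^{n-1}$ is a proper subset of a projective line. *)

From HB Require Import structures.
From mathcomp Require Import all_boot all_order all_algebra.
From mathcomp Require Import all_classical all_reals all_analysis.
Set Implicit Arguments. Unset Strict Implicit. Unset Printing Implicit Defensive.
Import Order.TTheory GRing.Theory Num.Theory.
Import numFieldNormedType.Exports.
Local Open Scope ring_scope.
Local Open Scope classical_set_scope.

(* Conventions: points of RP^{n-1} are represented by nonzero row vectors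
   v : 'rV[R]_n (the point [v]); a matrix g acts by [v] |-> [v *m g].
   A projective line is the projectivization of a 2-dimensional subspace,
   represented by the row space of a matrix L with \rank L = 2. *)

(* A one-parameter subgroup of PGL(n,R), given by a continuous lift
   phi : R -> GL(n,R) which is a group homomorphism; the subgroup of PGL
   is the image of t |-> [phi t]. *)
Definition one_param_lift (R : realType) (n : nat) (phi : R -> 'M[R]_n) : Prop :=
  continuous (phi : R -> 'M[R]_(n, n)) /\ phi 0 = 1%:M /\
  (forall s t, phi (s + t) = phi s *m phi t) /\
  (forall t, phi t \in unitmx).

(* [g] is the identity of PGL(n,R) *)
Definition proj_trivial (R : realType) (n : nat) (g : 'M[R]_n) : Prop :=
  exists c : R, g = c%:M.

Definition proj_injective (R : realType) (n : nat) (phi : R -> 'M[R]_n) : Prop :=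
  forall t, proj_trivial (phi t) -> t = 0.

Definition orbit_in_proper_line (R : realType) (n : nat)
    (phi : R -> 'M[R]_n) (v : 'rV[R]_n) : Prop :=
  exists L : 'M[R]_n, \rank L = 2%N /\
    (forall t, (v *m phi t <= L)%MS) /\
    (exists w : 'rV[R]_n, w != 0 /\ (w <= L)%MS /\
       forall t (c : R), v *m phi t != c *: w).

Definition linear_flow (R : realType) (n : nat) (phi : R -> 'M[R]_n) : Prop :=
  proj_injective phi /\ forall v : 'rV[R]_n, v != 0 -> orbit_in_proper_line phi v.

(* Open subsets of RP^{n-1} correspond to open subsets of R^n \ {0}
   invariant under nonzero scaling. *)
Definition projsp_open (R : realType) (n : nat) (U : set 'rV[R]_n) : Prop :=
  open U /\ (forall v, U v -> v != 0) /\
  (forall v (c : R), U v -> c != 0 -> U (c *: v)).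

(* Fix [B = phi t1] not scalar. Planarity of the orbits ([rank [u; u B; u phi t] < 3])
   is a polynomial condition on [u] holding on the open set [U], hence everywhere,
   and some [v] in [U] is independent from [v B]. For [u] independent from [u B]
   this gives [u phi t = al t u + be t u B], where [t |-> al t + be t x] is a
   continuous one-parameter subgroup of [R[x]/(x^2 - p x - q)], with [x^2 - p x - q]
   the characteristic polynomial of [B] on [<u, u B>]. Complex roots would make the orbit cover the
   whole line: impossible for [v], hence for every [u], as [<u, u B>] and
   [<v, v B>] would meet and [B] would act on both with the same characteristic
   polynomial. Real roots split the subgroup into two positive characters, so [be]
   vanishes only at [0], which gives injectivity, and [2 al + p be > 0], so the
   orbit of [u] misses a point of its line. *)

From HB Require Import structures.
From mathcomp Require Import all_boot all_order all_algebra.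
From mathcomp Require Import all_classical all_reals all_analysis.
From mathcomp Require Import ring lra.
Import Order.TTheory GRing.Theory Num.Theory.
Import numFieldNormedType.Exports.
Local Open Scope ring_scope.
Local Open Scope classical_set_scope.
Set Implicit Arguments. Unset Strict Implicit. Unset Printing Implicit Defensive.

Section ContinuousAdditive.
Variables (R : realType) (g : R -> R).
Hypothesis gD : forall s t, g (s + t) = g s + g t.

Lemma additive0 : g 0 = 0.
Proof. by have := gD 0 0; rewrite addr0; lra. Qed.

Lemma additiveN x : g (- x) = - g x.
Proof. by have := gD x (- x); rewrite subrr additive0; lra. Qed.

Lemma additiveMn (k : nat) x : g (k%:R * x) = k%:R * g x.
Proof.
elim: k => [|k IH]; first by rewrite !mul0r additive0.
by rewrite -addn1 natrD !mulrDl !mul1r gD IH.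
Qed.

Lemma additiveMz (z : int) x : g (z%:~R * x) = z%:~R * g x.
Proof.
case: z => k; first by rewrite -!pmulrn additiveMn.
by rewrite NegzE !mulrNz !mulNr additiveN -!pmulrn additiveMn.
Qed.

Hypothesis cg : continuous g.

(* [g] is [T]-periodic, so its values are those it takes on the compact [0, T]. *)
Lemma additive_root_bounded T : 0 < T -> g T = 0 ->
  exists M, forall t, `|g t| <= M.
Proof.
move=> T0 gT.
have cgT : {within `[0, T], continuous g} by apply: continuous_subspaceT.
have [c1 _ gc1] := EVT_max (ltW T0) cgT.
have [c2 _ gc2] := EVT_min (ltW T0) cgT.
exists (`|g c1| + `|g c2|) => t.
pose z := Num.floor (t / T).
have /andP [zt tz] := floor_itv (t / T).
have -> : t = (t - z%:~R * T) + z%:~R * T by rewrite subrK.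
rewrite gD additiveMz gT mulr0 addr0.
have tzT : t - z%:~R * T \in `[0, T]%R.
  rewrite ler_pdivlMr // in zt; rewrite rmorphD /= ltr_pdivrMr // mulrDl mul1r in tz.
  by rewrite in_itv /=; apply/andP; split; lra.
have := gc1 _ tzT; have := gc2 _ tzT.
have := normr_ge0 (g c1); have := ler_norm (g c1).
have := normr_ge0 (g c2); have := ler_norm (- g c2); rewrite normrN.
by rewrite ler_norml => ? ? ? ? ? ?; apply/andP; split; lra.
Qed.

Lemma additive_bounded_eq0 M : (forall t, `|g t| <= M) -> forall t, g t = 0.
Proof.
move=> gM t; apply/eqP; apply: contraT => gt_neq0.
have gt_gt0 : 0 < `|g t| by rewrite normr_gt0.
have M_ge0 : 0 <= M / `|g t| by rewrite divr_ge0 // (le_trans _ (gM 0)).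
have := archi_boundP M_ge0; set k := Num.Def.archi_bound _ => Mk.
have := gM (k%:R * t); rewrite additiveMn normrM ger0_norm // -ler_pdivlMr //.
by move/(lt_le_trans Mk); rewrite ltxx.
Qed.

Lemma additive_root_eq0 t0 : t0 != 0 -> g t0 = 0 -> forall t, g t = 0.
Proof.
move=> t0_neq0 gt0.
have [T T0 gT] : exists2 T, 0 < T & g T = 0.
  case: (ltgtP t0 0) => [t0_lt0|t0_gt0|t0_eq0]; last by rewrite t0_eq0 eqxx in t0_neq0.
    by exists (- t0); rewrite ?oppr_gt0 // additiveN gt0 oppr0.
  by exists t0.
have [M gM] := additive_root_bounded T0 gT.
exact: additive_bounded_eq0 gM.
Qed.

End ContinuousAdditive.

Lemma continuous_sign_change_root (R : realType) (f : R -> R) a b :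
  continuous f -> f a * f b <= 0 -> exists c, f c = 0.
Proof.
move=> cf; wlog ab : a b / a <= b.
  move=> W fab; have [ab|/ltW ba] := lerP a b; first exact: (W a b ab fab).
  by apply: (W b a ba); rewrite mulrC.
move=> fab.
have cfab : {within `[a, b], continuous f} by apply: continuous_subspaceT.
have [c _ fc] : exists2 c, c \in `[a, b]%R & f c = 0.
  apply: IVT cfab _ => //; rewrite ge_min le_max.
  by case: (lerP (f a) 0) => fa; case: (lerP (f b) 0) => fb //=; nra.
by exists c.
Qed.

(* [1 - c (t + t) = 2 (1 - c t) (1 + c t)], so while [c] stays positive [1 - c]
   at least doubles along [t, 2t, 4t, ...]. *)
Lemma cos_doubling_eq1 (R : realType) (c : R -> R) :
  (forall t, 0 < c t <= 1) -> (forall t, c (t + t) = 2 * c t ^+ 2 - 1) ->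
  forall t, c t = 1.
Proof.
move=> c01 cD t; apply/eqP; rewrite eq_le; have /andP [ct_gt0 ->] := c01 t.
rewrite leNgt /=; apply/negP => ct_lt1.
have growth k : (2 ^ k)%:R * (1 - c t) <= 1 - c ((2 ^ k)%:R * t).
  elim: k => [|k IH]; first by rewrite expn0 !mul1r.
  have -> : (2 ^ k.+1)%:R * t = (2 ^ k)%:R * t + (2 ^ k)%:R * t.
    by rewrite expnS natrM; ring.
  have /andP [ck_gt0 ck_le1] := c01 ((2 ^ k)%:R * t).
  by rewrite cD expnS natrM; nra.
have d_gt0 : 0 < 1 - c t by rewrite subr_gt0.
have := @archi_boundP _ (1 - c t)^-1; rewrite invr_ge0 ltW //.
set k := Num.Def.archi_bound _ => /(_ isT) kd.
have k2k : (k%:R : R) <= (2 ^ k)%:R by rewrite ler_nat ltnW // ltn_expl.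
have := growth k; have /andP [ck_gt0 _] := c01 ((2 ^ k)%:R * t).
have : 1 < (2 ^ k)%:R * (1 - c t).
  by rewrite -ltr_pdivrMr // div1r; apply: lt_le_trans k2k.
lra.
Qed.

(* [t |-> al t + be t * x] is a continuous homomorphism from [(R, +)] to the
   multiplicative monoid of [R[x]/(x^2 - p x - q)], taking the value [x] at [t1]. *)
Record companion_flow (R : realType) (p q t1 : R) (al be : R -> R) : Prop :=
  CompanionFlow {
    flow_al_cont : continuous al;
    flow_be_cont : continuous be;
    flow_al0 : al 0 = 1;
    flow_be0 : be 0 = 0;
    flow_al1 : al t1 = 0;
    flow_be1 : be t1 = 1;
    flow_alD : forall s t, al (s + t) = al s * al t + q * (be s * be t);
    flow_beD : forall s t,
      be (s + t) = al s * be t + be s * al t + p * (be s * be t) }.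

Section CompanionFlow.
Variables (R : realType) (p q t1 : R) (al be : R -> R).
Hypothesis F : companion_flow p q t1 al be.

Local Notation disc := (p ^+ 2 + 4 * q).

Lemma flow_neq0 t : ~ (al t = 0 /\ be t = 0).
Proof.
move=> [al_t be_t]; have := flow_alD F t (- t).
by rewrite subrr (flow_al0 F) al_t be_t !mul0r mulr0 addr0 => /eqP; rewrite oner_eq0.
Qed.

Lemma continuous_flow_comb r : continuous (fun t => al t + r * be t).
Proof.
move=> x; apply: cvgD; first exact: (flow_al_cont F).
by apply: cvgMl_tmp; exact: (flow_be_cont F).
Qed.

Section Root.
Variable r : R.
Hypothesis root_r : r ^+ 2 = p * r + q.

(* Evaluation at the root [x = r] is a ring morphism out of [R[x]/(x^2 - p x - q)]. *)
Lemma flow_rootD s t :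
  al (s + t) + r * be (s + t) = (al s + r * be s) * (al t + r * be t).
Proof.
rewrite (flow_alD F) (flow_beD F).
have -> : (al s + r * be s) * (al t + r * be t) =
  al s * al t + q * (be s * be t) + r * (al s * be t + be s * al t + p * (be s * be t))
  + be s * be t * (r ^+ 2 - p * r - q) by ring.
by rewrite root_r; ring.
Qed.

Lemma flow_root_gt0 t : 0 < al t + r * be t.
Proof.
have f0 : al 0 + r * be 0 = 1 by rewrite (flow_al0 F) (flow_be0 F) mulr0 addr0.
rewrite lt_neqAle; apply/andP; split.
  apply/eqP => ft; have := flow_rootD t (- t).
  by rewrite subrr f0 -ft mul0r => /eqP; rewrite oner_eq0.
by rewrite (splitr t) flow_rootD -expr2 sqr_ge0.
Qed.

End Root.

Section RealRoots.
Hypothesis disc_ge0 : 0 <= disc.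

Let sq := Num.sqrt disc.
Let r1 := (p + sq) / 2.
Let r2 := (p - sq) / 2.

Let root_r1 : r1 ^+ 2 = p * r1 + q.
Proof.
apply/eqP; rewrite -subr_eq0.
have -> : r1 ^+ 2 - (p * r1 + q) = (sq ^+ 2 - disc) / 4 by rewrite /r1; field.
by rewrite sqr_sqrtr // subrr mul0r.
Qed.

Let root_r2 : r2 ^+ 2 = p * r2 + q.
Proof.
apply/eqP; rewrite -subr_eq0.
have -> : r2 ^+ 2 - (p * r2 + q) = (sq ^+ 2 - disc) / 4 by rewrite /r2; field.
by rewrite sqr_sqrtr // subrr mul0r.
Qed.

Lemma flow_trace_gt0 t : 0 < 2 * al t + p * be t.
Proof.
have -> : 2 * al t + p * be t = (al t + r1 * be t) + (al t + r2 * be t).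
  by rewrite /r1 /r2; field.
by rewrite addr_gt0 // flow_root_gt0.
Qed.

(* [be t = 0] makes [t] a root of a continuous additive function not vanishing
   at [t1]: [be / (al + r1 be)] for a double root, [ln] of the quotient of the two
   characters otherwise. *)
Lemma flow_be_eq0 t0 : be t0 = 0 -> t0 = 0.
Proof.
move=> be_t0; apply/eqP; apply: contraT => t0_neq0.
have f1_gt0 := flow_root_gt0 root_r1; have f2_gt0 := flow_root_gt0 root_r2.
have [sq0|sq_neq0] := eqVneq sq 0.
  pose g t := be t / (al t + r1 * be t).
  have gD s t : g (s + t) = g s + g t.
    rewrite /g flow_rootD // (flow_beD F).
    have p_r1 : p = 2 * r1 by rewrite /r1 sq0 addr0; field.
    by rewrite p_r1; field; rewrite !gt_eqF.
  have cg : continuous g.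
    move=> x; apply: cvgM; first exact: (flow_be_cont F).
    by apply: cvgV; [rewrite gt_eqF | exact: continuous_flow_comb _].
  have := additive_root_eq0 gD cg t0_neq0; rewrite /g be_t0 mul0r => /(_ erefl t1).
  have r1_gt0 : 0 < r1 by have := f1_gt0 t1; rewrite (flow_al1 F) (flow_be1 F) mulr1 add0r.
  by rewrite (flow_al1 F) (flow_be1 F) mul1r mulr1 add0r => /eqP; rewrite invr_eq0 gt_eqF.
pose g t := ln (al t + r1 * be t) - ln (al t + r2 * be t).
have gD s t : g (s + t) = g s + g t.
  by rewrite /g !flow_rootD // !lnM ?posrE //; ring.
have cg : continuous g.
  move=> x; apply: cvgB; apply: continuous_comp; try exact: continuous_flow_comb _;
  exact: continuous_ln.
have := additive_root_eq0 gD cg t0_neq0; rewrite /g be_t0 !mulr0 subrr => /(_ erefl t1).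
move/eqP; rewrite subr_eq0 => /eqP /ln_inj; rewrite !posrE => /(_ (f1_gt0 _) (f2_gt0 _)).
rewrite (flow_al1 F) (flow_be1 F) !mulr1 !add0r /r1 /r2 => /eqP.
rewrite -subr_eq0 -mulrBl mulf_eq0 invr_eq0 pnatr_eq0 orbF.
have -> : p + sq - (p - sq) = 2 * sq by ring.
by rewrite mulf_eq0 pnatr_eq0 (negPf sq_neq0).
Qed.

End RealRoots.

Section ComplexRoots.
Hypothesis disc_lt0 : disc < 0.

(* [re + i im] is the character [t |-> al t + be t * x] evaluated at the root
   [x = p / 2 + i w]. *)
Let w := Num.sqrt (- disc) / 2.
Let re t := al t + p / 2 * be t.
Let im t := w * be t.

Let w_gt0 : 0 < w.
Proof. by rewrite divr_gt0 // sqrtr_gt0 oppr_gt0. Qed.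

Let reD t : re (t + t) = re t ^+ 2 - im t ^+ 2.
Proof.
have w2 : w ^+ 2 = - disc / 4.
  by rewrite expr_div_n sqr_sqrtr ?oppr_ge0 ?ltW // -natrX.
by rewrite /re /im (flow_alD F) (flow_beD F) exprMn w2; field.
Qed.

Let imD t : im (t + t) = 2 * re t * im t.
Proof. by rewrite /re /im (flow_beD F); field. Qed.

Let norm_gt0 t : 0 < re t ^+ 2 + im t ^+ 2.
Proof.
rewrite lt_neqAle addr_ge0 ?sqr_ge0 // andbT eq_sym paddr_eq0 ?sqr_ge0 //.
rewrite !sqrf_eq0 /im mulf_eq0 (gt_eqF w_gt0) /=; apply/andP => -[/eqP re_t /eqP be_t].
by apply: (flow_neq0 (t := t)); rewrite /re be_t mulr0 addr0 in re_t.
Qed.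

(* Otherwise [re / |re + i im|] would be a positive solution of the cosine
   doubling formula different from [1] at [t1]. *)
Let re_root : exists s, re s = 0.
Proof.
have cre : continuous re by exact: continuous_flow_comb _.
suff [T re_T] : exists T, re T <= 0.
  apply: (continuous_sign_change_root (a := 0) (b := T)) cre _.
  by rewrite /re (flow_al0 F) (flow_be0 F) mulr0 addr0 mul1r.
apply/not_existsP => re_gt0; have {}re_gt0 t : 0 < re t by rewrite ltNge; apply/negP.
pose c t := re t / Num.sqrt (re t ^+ 2 + im t ^+ 2).
have c2 t : c t ^+ 2 = re t ^+ 2 / (re t ^+ 2 + im t ^+ 2).
  by rewrite expr_div_n sqr_sqrtr // ltW.
have c01 t : 0 < c t <= 1.
  have ct_gt0 : 0 < c t by rewrite divr_gt0 ?sqrtr_gt0.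
  have : c t ^+ 2 <= 1 by rewrite c2 ler_pdivrMr // mul1r lerDl sqr_ge0.
  by rewrite ct_gt0 /=; nra.
have cD t : c (t + t) = 2 * c t ^+ 2 - 1.
  have nD : re (t + t) ^+ 2 + im (t + t) ^+ 2 = (re t ^+ 2 + im t ^+ 2) ^+ 2.
    by rewrite reD imD; ring.
  rewrite c2 /c nD sqrtr_sqr ger0_norm ?ltW // reD.
  by field; rewrite gt_eqF.
have := cos_doubling_eq1 c01 cD t1; apply/eqP; rewrite neq_lt; apply/orP; left.
have : c t1 ^+ 2 < 1.
  rewrite c2 ltr_pdivrMr // mul1r ltrDl /im (flow_be1 F) mulr1 exprn_gt0 //.
by have /andP [ct1_gt0 _] := c01 t1; nra.
Qed.

Lemma flow_hits_every_direction a b : exists t, al t * b - be t * a = 0.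
Proof.
have [s re_s] := re_root.
have be_ss : be (s + s) = 0.
  by have /eqP := imD s; rewrite re_s mulr0 mul0r mulf_eq0 (gt_eqF w_gt0) => /eqP.
have al_ss : al (s + s) < 0.
  have := reD s; rewrite re_s expr0n sub0r /re be_ss mulr0 addr0 => ->.
  by rewrite oppr_lt0; have := norm_gt0 s; rewrite re_s expr0n add0r.
apply: (continuous_sign_change_root (a := 0) (b := s + s)).
  move=> x; apply: cvgB; apply: cvgMr_tmp; [exact: (flow_al_cont F) | exact: (flow_be_cont F)].
rewrite (flow_al0 F) (flow_be0 F) be_ss !mul0r !subr0 mul1r mulrCA -expr2.
by have := sqr_ge0 b; nra.
Qed.

End ComplexRoots.

End CompanionFlow.

Section TwoVectors.
Variables (R : fieldType) (n : nat).
Implicit Types (u v w x : 'rV[R]_n).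

Definition indep2 u w := forall a b : R, a *: u + b *: w = 0 -> a = 0 /\ b = 0.

Lemma mul_row_col_scalar u w (a b : R) :
  row_mx a%:M b%:M *m col_mx u w = a *: u + b *: w.
Proof. by rewrite mul_row_col !mul_scalar_mx. Qed.

Lemma indep2P u w : reflect (indep2 u w) (row_free (col_mx u w)).
Proof.
apply: (iffP idP) => [free a b abuw | indep].
  have : row_mx a%:M b%:M *m col_mx u w = 0 *m col_mx u w.
    by rewrite mul_row_col_scalar abuw mul0mx.
  move/(row_free_inj free)/eqP.
  by rewrite row_mx_eq0 => /andP [/eqP/matrixP/(_ 0 0) + /eqP/matrixP/(_ 0 0)]; rewrite !mxE.
apply: inj_row_free => k; rewrite -[k]hsubmxK [lsubmx k]mx11_scalar [rsubmx k]mx11_scalar.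
rewrite mul_row_col_scalar => /indep [-> ->].
by rewrite raddf0 row_mx0.
Qed.

Lemma indep2_rank u w : indep2 u w -> \rank (col_mx u w) = 2%N.
Proof. by move/indep2P/eqP. Qed.

Lemma indep2_neq0 u w : indep2 u w -> u != 0 /\ w != 0.
Proof.
move=> indep; split; apply/eqP => uw0.
  have /indep [/eqP] : 1 *: u + 0 *: w = 0 by rewrite uw0 scaler0 scale0r addr0.
  by rewrite oner_eq0.
have /indep [_ /eqP] : 0 *: u + 1 *: w = 0 by rewrite uw0 scaler0 scale0r addr0.
by rewrite oner_eq0.
Qed.

Lemma indep2_coef u w (a b c d : R) :
  indep2 u w -> a *: u + b *: w = c *: u + d *: w -> a = c /\ b = d.
Proof.
move=> indep e; have [/eqP + /eqP] : a - c = 0 /\ b - d = 0.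
  by apply: indep; rewrite !scalerBl addrACA e -opprD subrr.
by rewrite !subr_eq0 => /eqP -> /eqP ->.
Qed.

Lemma dep2_scale v w : v != 0 -> ~ indep2 v w -> exists l, w = l *: v.
Proof.
move=> v_neq0 /existsNP [a] /existsNP [b] /not_implyP [abvw ab_neq0].
have b_neq0 : b != 0.
  apply/eqP => b0; apply: ab_neq0; split => //; move: abvw.
  by rewrite b0 scale0r addr0 => /eqP; rewrite scaler_eq0 (negPf v_neq0) orbF => /eqP.
exists (- (a / b)); apply: (scalerI b_neq0).
rewrite scalerA mulrN mulrCA divff // mulr1 scaleNr.
by apply/eqP; rewrite -subr_eq0 opprK addrC abvw.
Qed.

Lemma sub_col_mx2 x u w : (x <= col_mx u w)%MS -> exists a b, x = a *: u + b *: w.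
Proof.
case/submxP => k ->; rewrite -[k]hsubmxK [lsubmx k]mx11_scalar [rsubmx k]mx11_scalar.
by rewrite mul_row_col_scalar; do 2 eexists.
Qed.

Lemma scale_add_sub_col_mx2 u w (a b : R) : ((a *: u + b *: w)%R <= col_mx u w)%MS.
Proof. by rewrite -mul_row_col_scalar submxMl. Qed.

Lemma indep2_span m (Z : 'M[R]_(m, n)) u w x :
  indep2 u w -> (u <= Z)%MS -> (w <= Z)%MS -> (\rank Z <= 2)%N ->
  (x <= Z)%MS -> exists a b, x = a *: u + b *: w.
Proof.
move=> indep uZ wZ rankZ xZ; apply: sub_col_mx2; apply: submx_trans xZ _.
have uwZ : (col_mx u w <= Z)%MS by rewrite col_mx_sub uZ wZ.
rewrite -(mxrank_leqif_sup uwZ).2 (indep2_rank indep) eqn_leq rankZ andbT.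
by rewrite -(indep2_rank indep) mxrankS.
Qed.

End TwoVectors.

Section ThreeVectors.
Variables (R : fieldType) (n : nat).
Implicit Types (a b c : 'rV[R]_n).

Definition col3 a b c : 'M[R]_(1 + (1 + 1), n) := col_mx a (col_mx b c).

Lemma col3_rank_lt a b c (L : 'M[R]_n) : \rank L = 2%N ->
  (a <= L)%MS -> (b <= L)%MS -> (c <= L)%MS -> (\rank (col3 a b c) < 3)%N.
Proof.
by move=> rankL aL bL cL; rewrite -[3%N]/(2.+1) ltnS -rankL mxrankS // !col_mx_sub aL bL cL.
Qed.

Lemma col3_span a b c : (\rank (col3 a b c) < 3)%N -> indep2 a b ->
  exists x y, c = x *: a + y *: b.
Proof.
move=> rank3 indep.
have := submx_refl (col3 a b c); rewrite {1}/col3 !col_mx_sub => /and3P [aX bX cX].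
exact: (indep2_span indep aX bX (ltnSE rank3) cX).
Qed.

Lemma col3_dep a b c : (\rank (col3 a b c) < 3)%N ->
  exists x y z, ~ [/\ x = 0, y = 0 & z = 0] /\ x *: a + y *: b + z *: c = 0.
Proof.
move=> rank3; case: (pselect (indep2 a b)) => [indep | /existsNP [x] /existsNP [y]].
  have [x [y ->]] := col3_span rank3 indep.
  exists x, y, (-1); split; first by case=> _ _ /eqP; rewrite oppr_eq0 oner_eq0.
  by rewrite scaleN1r subrr.
move=> /not_implyP [xy_dep xy_neq0]; exists x, y, 0.
by split; [case=> x0 y0 _; apply: xy_neq0 | rewrite scale0r addr0].
Qed.

Lemma eigen_everywhere_scalar (B : 'M[R]_n) :
  (forall v : 'rV[R]_n, exists l, v *m B = l *: v) -> exists l, B = l%:M.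
Proof.
move=> eig; have /choice [lam lamE] : forall i : 'I_n, exists l, row i B = l *: delta_mx 0 i.
  by move=> i; rewrite rowE.
have Bij i j : B i j = lam i * (i == j)%:R.
  by have := congr1 (fun v : 'rV[R]_n => v 0 j) (lamE i); rewrite !mxE eqxx eq_sym.
have [l lE] := eig (const_mx 1).
have lamE' j : lam j = l.
  have := congr1 (fun v : 'rV[R]_n => v 0 j) lE; rewrite !mxE (bigD1 j) //= big1.
    by rewrite mxE mul1r Bij eqxx !mulr1 addr0.
  by move=> i /negPf ij; rewrite mxE Bij ij !mulr0.
by exists l; apply/matrixP => i j; rewrite Bij lamE' !mxE mulr_natr.
Qed.

End ThreeVectors.

Lemma cross_eq0_proportional (R : fieldType) (x y a b : R) :
  x * b - y * a = 0 -> ~ (a = 0 /\ b = 0) -> exists c, x = c * a /\ y = c * b.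
Proof.
move=> cross ab_neq0; have [a0|a_neq0] := eqVneq a 0.
  have b_neq0 : b != 0 by apply/eqP => b0; apply: ab_neq0.
  exists (y / b); split; last by rewrite divfK.
  by apply: (mulIf b_neq0); move: cross; rewrite a0 !mulr0 mul0r subr0.
exists (x / a); split; first by rewrite divfK.
by apply: (mulIf a_neq0); rewrite mulrAC divfK //; apply/eqP; rewrite eq_sym -subr_eq0 cross.
Qed.

Lemma quad_form_gt0 (R : realFieldType) (p q a b : R) :
  p ^+ 2 + 4 * q < 0 -> ~ (a = 0 /\ b = 0) -> 0 < a ^+ 2 + p * a * b - q * b ^+ 2.
Proof.
move=> disc_lt0 ab_neq0; have [b0|b_neq0] := eqVneq b 0.
  have a_neq0 : a != 0 by apply/eqP => a0; apply: ab_neq0.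
  by rewrite b0 mulr0 expr0n /= mulr0 subr0 addr0 exprn_even_gt0.
have : 0 < b ^+ 2 by rewrite exprn_even_gt0.
by have := sqr_ge0 (2 * a + p * b); nra.
Qed.

Section CompanionPlanes.
Variables (R : realFieldType) (n : nat) (B : 'M[R]_n).
Implicit Types (u v : 'rV[R]_n).

Lemma companion_mulmx u p q c d :
  u *m B *m B = q *: u + p *: (u *m B) ->
  (c *: u + d *: (u *m B)) *m B = (d * q) *: u + (c + d * p) *: (u *m B).
Proof. by move=> uBB; rewrite mulmxDl -!scalemxAl uBB; apply/rowP => j; rewrite !mxE; ring. Qed.

Lemma companion_cayley_hamilton u p q (h : 'rV[R]_n) :
  u *m B *m B = q *: u + p *: (u *m B) -> (h <= col_mx u (u *m B))%MS ->
  h *m B *m B = q *: h + p *: (h *m B).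
Proof.
move=> uBB /sub_col_mx2 [c [d ->]]; rewrite !(companion_mulmx _ _ uBB).
by apply/rowP => j; rewrite !mxE; ring.
Qed.

(* Over a negative discriminant [<u, u B>] contains no eigenvector of [B], so a
   nonzero [h] common to two such planes spans both together with [h B], and [B]
   acts on both by the same companion matrix. *)
Lemma companion_common_eq u v p q p' q' a b :
  indep2 u (u *m B) ->
  u *m B *m B = q *: u + p *: (u *m B) -> v *m B *m B = q' *: v + p' *: (v *m B) ->
  p ^+ 2 + 4 * q < 0 -> ~ (a = 0 /\ b = 0) ->
  ((a *: u + b *: (u *m B))%R <= col_mx v (v *m B))%MS ->
  p = p' /\ q = q'.
Proof.
move=> indu uBB vBB disc_lt0 ab_neq0 hv.
set h := a *: u + b *: (u *m B) in hv.
have hBB := companion_cayley_hamilton uBB (scale_add_sub_col_mx2 _ _ a b).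
have hBB' := companion_cayley_hamilton vBB hv.
have : (q' - q) *: h + (p' - p) *: (h *m B) = 0.
  by rewrite !scalerBl addrACA -hBB' hBB -opprD subrr.
rewrite (companion_mulmx _ _ uBB) /h => hE0.
have [e1 e2] : (p' - p) * (b * q) + (q' - q) * a = 0 /\
               (p' - p) * (a + b * p) + (q' - q) * b = 0.
  by apply: indu; rewrite -[RHS]hE0; apply/rowP => j; rewrite !mxE; ring.
have dp : p' - p = 0.
  have /lt0r_neq0 N_neq0 := quad_form_gt0 disc_lt0 ab_neq0.
  have : (p' - p) * (a ^+ 2 + p * a * b - q * b ^+ 2) = 0.
    transitivity (a * ((p' - p) * (a + b * p) + (q' - q) * b) -
                  b * ((p' - p) * (b * q) + (q' - q) * a)); first by ring.
    by rewrite e1 e2 !mulr0 subrr.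
  by move/eqP; rewrite mulf_eq0 (negPf N_neq0) orbF => /eqP.
have dq : q' - q = 0.
  apply/eqP; move: e1 e2; rewrite dp !mul0r !add0r => /eqP + /eqP.
  by rewrite !mulf_eq0 => /orP [-> //|/eqP a0] /orP [-> //|/eqP b0]; case: ab_neq0.
by split; apply/eqP; rewrite eq_sym -subr_eq0 ?dp ?dq.
Qed.

Lemma companion_pairs_eq u v p q p' q' :
  indep2 u (u *m B) -> indep2 v (v *m B) ->
  u *m B *m B = q *: u + p *: (u *m B) -> v *m B *m B = q' *: v + p' *: (v *m B) ->
  p ^+ 2 + 4 * q < 0 ->
  (exists x y z, ~ [/\ x = 0, y = 0 & z = 0] /\
     x *: (u + v) + y *: ((u + v) *m B) + z *: ((u + v) *m B *m B) = 0) ->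
  p = p' /\ q = q'.
Proof.
move=> indu indv uBB vBB disc_lt0 [x [y [z [xyz_neq0 xyzE]]]].
rewrite !mulmxDl uBB vBB in xyzE.
pose a := x + z * q; pose b := y + z * p; pose a' := x + z * q'; pose b' := y + z * p'.
have hE : a *: u + b *: (u *m B) = (- a') *: v + (- b') *: (v *m B).
  apply/eqP; rewrite -subr_eq0 -[X in X == _]addr0 -{2}xyzE; apply/eqP.
  by apply/rowP => j; rewrite !mxE /a /b /a' /b'; ring.
case: (pselect (a = 0 /\ b = 0)) => [[a0 b0] | ab_neq0]; last first.
  by apply: (companion_common_eq indu uBB vBB disc_lt0 ab_neq0); rewrite hE scale_add_sub_col_mx2.
have [/eqP + /eqP] : - a' = 0 /\ - b' = 0 by apply: indv; rewrite -hE a0 b0 !scale0r addr0.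
rewrite !oppr_eq0 => /eqP a'0 /eqP b'0.
have z_neq0 : z != 0.
  apply/eqP => z0; apply: xyz_neq0; split => //.
    by move: a0; rewrite /a z0 mul0r addr0.
  by move: b0; rewrite /b z0 mul0r addr0.
move: a0 b0 a'0 b'0; rewrite /a /b /a' /b' => a0 b0 a'0 b'0.
by split; apply: (mulfI z_neq0); lra.
Qed.

End CompanionPlanes.

(* Otherwise a maximal minor of [X1 + r X0] is a polynomial in [r] that does not
   vanish at [0] but vanishes at every [r > K]. *)
Lemma mxrank_pencil_lt (R : numFieldType) k m (X0 X1 : 'M[R]_(k, m)) (K : R) :
  (forall r, K < r -> (\rank (X1 + r *: X0)%R < k)%N) -> (\rank X1 < k)%N.
Proof.
move=> rank_lt; rewrite ltn_neqAle rank_leq_row andbT; apply/negP => /eqP rankX1.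
have full : row_full X1^T by rewrite /row_full mxrank_tr rankX1.
pose f := fullrankfun full.
pose P : 'M[{poly R}]_(m, k) := map_mx polyC X1^T + 'X *: map_mx polyC X0^T.
pose Q := \det (rowsub f P).
have QE r : Q.[r] = \det (rowsub f (X1 + r *: X0)^T).
  rewrite /Q -horner_evalE -det_map_mx; congr (\det _).
  apply/matrixP => i j; rewrite !mxE /= horner_evalE.
  by rewrite hornerD hornerM hornerX !hornerC.
have Q0 : Q = 0.
  apply: (@roots_geq_poly_eq0 _ _ [seq K + i.+1%:R | i <- iota 0 (size Q)]).
  - apply/allP => _ /mapP [i _ ->]; rewrite /root QE -[_ == 0]negbK -unitfE -unitmxE.
    apply/negP => /mxrank_unit rank_minor.
    have Kr : K < K + i.+1%:R by rewrite ltrDl ltr0Sn.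
    have := mxrankS (rowsub_sub f (X1 + (K + i.+1%:R) *: X0)^T).
    by rewrite mxrank_tr rank_minor leqNgt rank_lt.
  - rewrite map_inj_uniq ?iota_uniq // => i j /addrI /eqP.
    by rewrite eqr_nat eqSS => /eqP.
  - by rewrite size_map size_iota.
have := QE 0; rewrite Q0 horner0 scale0r addr0 => /esym /eqP.
by apply/negP; rewrite -unitfE -unitmxE fullrowsub_unit.
Qed.

Section OpenSets.
Variables (R : realType) (n : nat).
Implicit Types (U : set 'rV[R]_n) (u w : 'rV[R]_n).

Lemma open_line_nbhs U w0 u : open U -> U w0 ->
  exists2 e : R, 0 < e & forall s : R, `|s| < e -> U (w0 + s *: u).
Proof.
move=> oU Uw0; have /nbhs_ballP [e e_gt0 eU] : nbhs w0 U by apply: open_nbhs_nbhs.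
have u1_gt0 : 0 < `|u| + 1 by rewrite ltr_wpDl.
exists (e / (`|u| + 1)) => [|s]; first by rewrite divr_gt0.
rewrite ltr_pdivlMr // => se; apply: eU.
rewrite -ball_normE /ball_ /= opprD addrA subrr add0r normrN normrZ.
by apply: le_lt_trans se; rewrite ler_wpM2l // lerDl.
Qed.

(* The rank condition is polynomial along each line [w0 + s u] and holds near [s = 0]. *)
Lemma rank_lt_open_linear k m (F : 'rV[R]_n -> 'M[R]_(k, m)) U w0 :
  (forall a b (r : R), F (a + r *: b) = F a + r *: F b) ->
  open U -> U w0 -> (forall w, U w -> (\rank (F w) < k)%N) ->
  forall u, (\rank (F u) < k)%N.
Proof.
move=> F_lin oU Uw0 rankU u; have [e e_gt0 eU] := open_line_nbhs u oU Uw0.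
apply: (@mxrank_pencil_lt _ _ _ (F w0) _ e^-1) => r er.
have r_gt0 : 0 < r by apply: lt_trans er; rewrite invr_gt0.
have -> : F u + r *: F w0 = r *: F (w0 + r^-1 *: u).
  by rewrite F_lin scalerDr scalerA divff ?gt_eqF // scale1r addrC.
rewrite mxrank_scale_nz ?gt_eqF //; apply/rankU/eU.
by rewrite gtr0_norm ?invr_gt0 // invf_plt ?posrE.
Qed.

Lemma open_eigen_scalar U w0 (B : 'M[R]_n) : open U -> U w0 ->
  (forall v, U v -> ~ indep2 v (v *m B)) -> exists l, B = l%:M.
Proof.
move=> oU Uw0 depU; apply: eigen_everywhere_scalar => v.
have rank_lt2 w : (\rank (col_mx w (w *m B)) < 2)%N.
  apply: (rank_lt_open_linear (F := fun w => col_mx w (w *m B))) oU Uw0 _ w.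
    by move=> a b r; rewrite mulmxDl -scalemxAl scale_col_mx add_col_mx.
  by move=> {}w Uw; rewrite ltn_neqAle rank_leq_row andbT; apply/negP => /indep2P /(depU w Uw).
have [->|v_neq0] := eqVneq v 0; first by exists 0; rewrite mul0mx scaler0.
have [|l vB] := @dep2_scale _ _ v (v *m B) v_neq0; last by exists l.
by move/indep2_rank/eqP; rewrite ltn_eqF.
Qed.

End OpenSets.

Lemma continuous_mulmx_entry (R : realType) k m n p (A : 'M[R]_(k, m))
    (Y : R -> 'M[R]_(m, n)) (C : 'M[R]_(n, p)) i j :
  continuous Y -> continuous (fun t => (A *m Y t *m C) i j).
Proof.
move=> cY; have sum_cont (I : finType) (f : I -> R -> R) :
    (forall l, continuous (f l)) -> continuous (fun t => \sum_l f l t).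
  move=> cf; apply: (@continuous_big _ _ +%R 0 xpredT) => [|l _]; last exact: cf.
  exact: add_continuous.
have AY_cont l : continuous (fun t => (A *m Y t) i l).
  have -> : (fun t => (A *m Y t) i l) = (fun t => \sum_l' A i l' * Y t l' l).
    by apply/funext => t; rewrite mxE.
  apply: (sum_cont _ (fun l' t => A i l' * Y t l' l)) => l' x.
  exact: cvgMl_tmp (continuous_comp (cY x) (@coord_continuous _ _ _ l' l (Y x))).
have -> : (fun t => (A *m Y t *m C) i j) = (fun t => \sum_l (A *m Y t) i l * C l j).
  by apply/funext => t; rewrite mxE.
apply: (sum_cont _ (fun l t => (A *m Y t) i l * C l j)) => l x.
exact: cvgMr_tmp (AY_cont l x).
Qed.

Lemma indep2_mul_nontrivial (R : realType) n (u : 'rV[R]_n) (M : 'M[R]_n) :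
  indep2 u (u *m M) -> ~ proj_trivial M.
Proof.
move=> indep [c Mc].
have /indep [_ /eqP] : c *: u + (-1) *: (u *m M) = 0.
  by rewrite Mc mul_mx_scalar scaleN1r subrr.
by rewrite oppr_eq0 oner_eq0.
Qed.

Section OneParameterSubgroup.
Variables (R : realType) (n : nat) (phi : R -> 'M[R]_n).
Hypothesis Hphi : one_param_lift phi.
Implicit Types (u v : 'rV[R]_n).

Let phi0 : phi 0 = 1%:M. Proof. by case: Hphi => _ []. Qed.
Let phiD s t : phi (s + t) = phi s *m phi t. Proof. by case: Hphi => _ [_ []]. Qed.

Lemma orbit_neq0 u t : u != 0 -> u *m phi t != 0.
Proof.
apply: contraNneq => uphi0.
by rewrite -[u]mulmx1 -phi0 -(subrr t) phiD mulmxA uphi0 mul0mx.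
Qed.

Definition orbit_coords u t1 (al be : R -> R) :=
  forall t, u *m phi t = al t *: u + be t *: (u *m phi t1).

Lemma orbit_coords_sq u t1 p q al be :
  companion_flow p q t1 al be -> orbit_coords u t1 al be ->
  u *m phi t1 *m phi t1 = q *: u + p *: (u *m phi t1).
Proof.
move=> F uE; rewrite -mulmxA -phiD uE (flow_alD F) (flow_beD F) (flow_al1 F) (flow_be1 F).
by congr (_ *: _ + _ *: _); ring.
Qed.

Lemma orbit_companion_flow u t1 :
  (forall t, (\rank (col3 u (u *m phi t1) (u *m phi t)) < 3)%N) ->
  indep2 u (u *m phi t1) ->
  exists p q (al be : R -> R), companion_flow p q t1 al be /\ orbit_coords u t1 al be.
Proof.
move=> planar indep; set uB := u *m phi t1 in planar indep *.
have /row_freeP [C uC] : row_free (col_mx u uB) by apply/indep2P.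
pose al t := (u *m phi t *m C) 0 (lshift 1 0).
pose be t := (u *m phi t *m C) 0 (rshift 1 0).
have uE : orbit_coords u t1 al be.
  move=> t; rewrite /al /be; have [a [b ->]] := col3_span (planar t) indep.
  rewrite -mul_row_col_scalar -mulmxA uC mulmx1 row_mxEl row_mxEr.
  by rewrite mul_row_col_scalar !mxE eqxx !mulr1n.
have [al0 be0] : al 0 = 1 /\ be 0 = 0.
  by apply: (indep2_coef indep); rewrite -uE phi0 mulmx1 scale1r scale0r addr0.
have [al1 be1] : al t1 = 0 /\ be t1 = 1.
  by apply: (indep2_coef indep); rewrite -uE scale1r scale0r add0r.
pose p := be (t1 + t1); pose q := al (t1 + t1).
have uBB : uB *m phi t1 = q *: u + p *: uB by rewrite /uB -mulmxA -phiD uE.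
have uBE t : uB *m phi t = al t *: uB + be t *: (q *: u + p *: uB).
  by rewrite /uB -mulmxA -phiD addrC phiD mulmxA uE mulmxDl -!scalemxAl uBB.
have uD s t : u *m phi (s + t) =
    (al s * al t + q * (be s * be t)) *: u +
    (al s * be t + be s * al t + p * (be s * be t)) *: uB.
  rewrite phiD mulmxA uE mulmxDl -!scalemxAl uBE uE.
  by apply/rowP => j; rewrite !mxE; ring.
have [cal cbe] : continuous al /\ continuous be.
  by split; apply: continuous_mulmx_entry; case: Hphi.
exists p, q, al, be; split => //; split => // s t;
  by have [] := indep2_coef indep (etrans (esym (uE (s + t))) (uD s t)).
Qed.

Lemma proper_orbit_disc_ge0 v t1 p q al be :
  orbit_in_proper_line phi v -> indep2 v (v *m phi t1) ->
  companion_flow p q t1 al be -> orbit_coords v t1 al be -> 0 <= p ^+ 2 + 4 * q.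
Proof.
move=> [L [rankL [orbitL [w [w_neq0 [wL w_off]]]]]] indep F vE.
rewrite leNgt; apply/negP => disc_lt0.
have vL : (v <= L)%MS by have := orbitL 0; rewrite phi0 mulmx1.
have [a [b wE]] := indep2_span indep vL (orbitL t1) (eq_leq rankL) wL.
have ab_neq0 : ~ (a = 0 /\ b = 0).
  by case=> a0 b0; move: w_neq0; rewrite wE a0 b0 !scale0r addr0 eqxx.
have [t /cross_eq0_proportional /(_ ab_neq0) [c [alE beE]]] := flow_hits_every_direction F disc_lt0 a b.
by move/eqP: (w_off t c); apply; rewrite vE alE beE wE scalerDr !scalerA.
Qed.

Section PlanarOrbits.
Hypothesis planar : forall u t1 t, (\rank (col3 u (u *m phi t1) (u *m phi t)) < 3)%N.

Lemma orbit_disc_ge0 u v t1 p q al be :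
  orbit_in_proper_line phi v -> indep2 v (v *m phi t1) -> indep2 u (u *m phi t1) ->
  companion_flow p q t1 al be -> orbit_coords u t1 al be -> 0 <= p ^+ 2 + 4 * q.
Proof.
move=> orbit_v indv indu F uE; rewrite leNgt; apply/negP => disc_lt0.
have [p' [q' [al' [be' [F' vE]]]]] := orbit_companion_flow (planar v t1) indv.
have [|pE qE] := companion_pairs_eq indu indv (orbit_coords_sq F uE) (orbit_coords_sq F' vE) disc_lt0.
  by have := col3_dep (planar (u + v) t1 (t1 + t1)); rewrite phiD mulmxA.
by move: (proper_orbit_disc_ge0 orbit_v indv F' vE); rewrite -pE -qE leNgt disc_lt0.
Qed.

Lemma proj_injective_of_proper_orbit v t1 :
  orbit_in_proper_line phi v -> indep2 v (v *m phi t1) -> proj_injective phi.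
Proof.
move=> orbit_v indv t0 [c phic].
have [p [q [al [be [F vE]]]]] := orbit_companion_flow (planar v t1) indv.
have [_ be_t0] : c = al t0 /\ 0 = be t0.
  by apply: (indep2_coef indv); rewrite -vE phic mul_mx_scalar scale0r addr0.
apply: (flow_be_eq0 F _ (esym be_t0)).
exact: proper_orbit_disc_ge0 orbit_v indv F vE.
Qed.

(* The point of [<u, u phi t1>] with coordinates [(- p, 2)] is off the orbit, as
   [2 al + p be > 0]. *)
Lemma indep2_orbit_in_proper_line u v t1 :
  orbit_in_proper_line phi v -> indep2 v (v *m phi t1) -> indep2 u (u *m phi t1) ->
  orbit_in_proper_line phi u.
Proof.
move=> orbit_v indv indu.
have [p [q [al [be [F uE]]]]] := orbit_companion_flow (planar u t1) indu.
have disc_ge0 := orbit_disc_ge0 orbit_v indv indu F uE.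
exists <<col_mx u (u *m phi t1)>>%MS; split; first by rewrite mxrank_gen indep2_rank.
split=> [t|]; first by rewrite genmxE uE scale_add_sub_col_mx2.
exists ((- p) *: u + 2 *: (u *m phi t1)); split.
  by apply/eqP => /indu [_ /eqP]; rewrite pnatr_eq0.
split=> [|t c]; first by rewrite genmxE scale_add_sub_col_mx2.
apply/eqP; rewrite uE scalerDr !scalerA => /(indep2_coef indu) [alE beE].
by have := flow_trace_gt0 F disc_ge0 t; rewrite alE beE; lra.
Qed.

End PlanarOrbits.

Lemma eigen_orbit_in_proper_line u t1 :
  u != 0 -> ~ proj_trivial (phi t1) -> (forall t, ~ indep2 u (u *m phi t)) ->
  orbit_in_proper_line phi u.
Proof.
move=> u_neq0 nontriv dep.
have eig t : exists l, u *m phi t = l *: u by apply: dep2_scale.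
have [e inde] : exists e, indep2 u e.
  apply/not_existsP => dep_u; apply: nontriv; apply: eigen_everywhere_scalar => x.
  have [a xE] := dep2_scale u_neq0 (dep_u x); have [l uE] := eig t1.
  by exists l; rewrite xE -scalemxAl uE !scalerA mulrC.
exists <<col_mx u e>>%MS; split; first by rewrite mxrank_gen indep2_rank.
split=> [t|]; first by have [l ->] := eig t; rewrite genmxE scalemx_sub // -addsmxE addsmxSl.
exists e; split; first by have [] := indep2_neq0 inde.
split=> [|t c]; first by rewrite genmxE -addsmxE addsmxSr.
apply/eqP => uphi; have [l ul] := eig t.
have [l0 _] : l = 0 /\ - c = 0 by apply: inde; rewrite scaleNr -ul uphi subrr.
by move: (orbit_neq0 t u_neq0); rewrite ul l0 scale0r eqxx.
Qed.

Lemma open_planar_orbits (U : set 'rV[R]_n) w0 :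
  open U -> U w0 -> (forall v, U v -> orbit_in_proper_line phi v) ->
  forall u t1 t, (\rank (col3 u (u *m phi t1) (u *m phi t)) < 3)%N.
Proof.
move=> oU Uw0 orbitU u t1 t.
apply: (rank_lt_open_linear (F := fun w => col3 w (w *m phi t1) (w *m phi t))) oU Uw0 _ u.
  by move=> a b r; rewrite /col3 !mulmxDl -!scalemxAl !scale_col_mx !add_col_mx.
move=> w /orbitU [L [rankL [orbitL _]]].
by apply: col3_rank_lt rankL _ (orbitL t1) (orbitL t); have := orbitL 0; rewrite phi0 mulmx1.
Qed.

End OneParameterSubgroup.

Unset Implicit Arguments.

Theorem lemma1p2 (R : realType) (n : nat) (phi : R -> 'M[R]_n)
    (U : set 'rV[R]_n) :
  one_param_lift phi ->
  (exists t, ~ proj_trivial (phi t)) ->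
  projsp_open U -> U !=set0 ->
  (forall v, U v -> orbit_in_proper_line phi v) ->
  linear_flow phi.
Proof.
move=> Hphi [t1 nontriv] [oU _] [w0 Uw0] orbitU.
have planar := open_planar_orbits Hphi oU Uw0 orbitU.
have indepU t : ~ proj_trivial (phi t) -> exists2 v, U v & indep2 v (v *m phi t).
  move=> nontriv_t; apply/not_exists2P => dep; apply: nontriv_t.
  by apply: (open_eigen_scalar oU Uw0) => v Uv; have [] := dep v.
have [v Uv indv] := indepU t1 nontriv.
split; first by apply: (proj_injective_of_proper_orbit Hphi planar (orbitU v Uv) indv).
move=> u u_neq0; case: (pselect (exists t, indep2 u (u *m phi t)))=> [[t indu] | dep].
  have [v' Uv' indv'] := indepU t (indep2_mul_nontrivial indu).
  by apply: (indep2_orbit_in_proper_line Hphi planar (orbitU v' Uv') indv' indu).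
by apply: (eigen_orbit_in_proper_line Hphi u_neq0 nontriv) => t indu; apply: dep; exists t.
Qed.
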